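(* In the setting below, for each $1\le k\le n$ and each $1\le t\le mn$, $$\mathbb{E}\left(X_{k,t+1}\mid g_{\le t}, z_{\le t-1}\right)\le X_{k,t}.$$
   Context: Setting: $m,n$ are positive integers with $n\ge 1200\sqrt m$. A deck of $mn$ cards with $m$ copies of each label $1,\dots,n$ is shuffled uniformly at random. A fixed guessing strategy is used: in round $t=1,\dots,mn$ the Guesser guesses $g_t\in\{1,\dots,n\}$, a function (possibly randomized independently of the deck) of $y_1,\dots,y_{t-1}$, where $y_t\in\{0,1\}$ is the indicator that the $t$-th card has label $g_t$. For a vector $v$, $v_{\le t}:=(v_1,\dots,v_t)$. For $1\le k\le n$, $1\le t\le mn+1$: $a(k,t):=|\{1\le i<t: g_i=k\}|$. Let $Y:=\lfloor \tfrac16\sqrt m\, n\rfloor$. Let $(z_1,\dots,z_{mn})\in\{0,1\}^{mn}$ be a random vector (on an extension of the probability space), with $c(k,t):=|\{1\le i<t: g_i=k,\ z_i=1\}|$, satisfying almost surely: (a) for all $k,t$: $m-\max\{mn-a(k,t)-Y,0\}\le c(k,t)\le m$; (b) for each $t$, conditioned on $g_{\le t},y_{\le t}$, the coordinates of $z_{\le t}$ are mutually independent and independent from $g_{\le mn},y_{\le mn}$; (c) for each $t$, if $a(g_t,t)<mn-Y$ then $\mathbb{E}(z_t\mid g_{\le t},z_{\le t-1})=\frac{m-c(g_t,t)}{mn-a(g_t,t)-Y}$; (d) for each $t$, if $\mathbb{E}(y_t\mid g_{\le t},y_{\le t-1})\le\mathbb{E}(z_t\mid g_{\le t},z_{\le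 t-1})$ then $y_t\le z_t$. (Such a vector exists.) Define $f:\mathbb{R}\to\mathbb{R}$ by $f(x)=x^2$ if $x\le 0$, $f(x)=0$ if $0<x<Y/n$, and $f(x)=(x-Y/n)^2$ if $x\ge Y/n$. For $1\le k\le n$, $1\le t\le mn+1$, let $$X_{k,t}:=f\!\left(c(k,t)-\frac{a(k,t)}{n}\right)-3c(k,t)-\frac{3a(k,t)}{n}.$$ *)

From mathcomp Require Import all_boot all_order all_algebra.
From mathcomp Require Import reals.
Unset Printing Implicit Defensive.
Import Order.TTheory GRing.Theory Num.Theory.
Local Open Scope ring_scope.

Section Defs.
Variable R : realType.
Variable Omega : finType.
Variable P : Omega -> R.

Definition is_prob : Prop := (forall w, 0 <= P w) /\ \sum_(w : Omega) P w = 1.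

Definition Pr (E : pred Omega) : R := \sum_(w : Omega | E w) P w.

(* Elementary conditional expectation of X given the discrete random variable
   [key] (a finite-valued sigma-algebra), evaluated at the sample point w:
   E(X | key)(w) = E(X ; key = key w) / P(key = key w).
   It is only used at points w with P w > 0 (so the denominator is > 0). *)
Definition condexp (K : eqType) (X : Omega -> R) (key : Omega -> K) (w : Omega) : R :=
  (\sum_(w' : Omega | key w' == key w) P w' * X w') /
  (\sum_(w' : Omega | key w' == key w) P w').

End Defs.

(* Rounds are indexed 1..mn; labels 1..n are represented by 'I_n = {0..n-1}. *)

(* the deck: [d i] is the label of the i-th card, 1 <= i <= mn;
   valid = every label occurs exactly m times among positions 1..mn *)
Definition valid_deck (m n : nat) (d : nat -> 'I_n) : bool :=
  [forall k : 'I_n, count (fun i => d i == k) (iota 1 (m * n)) == m].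

Definition agree (m n : nat) (d d' : nat -> 'I_n) : bool :=
  all (fun i => d i == d' i) (iota 1 (m * n)).

Definition yv {n : nat} (deck g : nat -> 'I_n) (t : nat) : bool := deck t == g t.

Definition pre {A : Type} (v : nat -> A) (t : nat) : seq A := [seq v i | i <- iota 1 t].

Definition acnt {n : nat} (g : nat -> 'I_n) (k : 'I_n) (t : nat) : nat :=
  count (fun i => g i == k) (iota 1 t.-1).

Definition ccnt {n : nat} (g : nat -> 'I_n) (z : nat -> bool) (k : 'I_n) (t : nat) : nat :=
  count (fun i => (g i == k) && z i) (iota 1 t.-1).

Definition Ybig (m n : nat) (R : realType) : nat :=
  `| Num.floor (Num.sqrt (m%:R : R) * n%:R / 6) |%N.

Definition fpot (m n : nat) (R : realType) (x : R) : R :=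
  if x <= 0 then x ^+ 2
  else if x < (Ybig m n R)%:R / n%:R then 0
  else (x - (Ybig m n R)%:R / n%:R) ^+ 2.

Definition Xkt (m n : nat) (R : realType) (g : nat -> 'I_n) (z : nat -> bool)
    (k : 'I_n) (t : nat) : R :=
  fpot m n R ((ccnt g z k t)%:R - (acnt g k t)%:R / n%:R)
  - 3 * (ccnt g z k t)%:R - 3 * (acnt g k t)%:R / n%:R.

From mathcomp Require Import all_boot all_order all_algebra.
From mathcomp Require Import reals.
From mathcomp Require Import ring lra zify.
Import Order.TTheory GRing.Theory Num.Theory.
Local Open Scope ring_scope.

(* Fix the history g_{<=t}, z_{<t}. If g_t <> k, then X_{k,t+1} = X_{k,t}. Otherwise
   a(k,.) grows by 1 and c(k,.) by z_t, whose conditional mean p is given by (c), so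
   x = c - a/n moves to x + 1 - 1/n with probability p and to x - 1/n otherwise. The
   linear terms -3c - 3a/n lose 3p + 3/n on average, which pays for the expected
   growth of f provided p >= 1/n on the branch x <= 0 (where f = x^2) and p <= 1/n on
   the branch x >= Y/n (where f = (x - Y/n)^2). Both follow from the formula in (c),
   since p >= 1/n iff n c <= a + Y; when (c) does not apply (a + Y >= mn), property
   (a) forces c = m, hence z_t = 0 and x > 0. *)

(* The ratio exceeds 1/N iff N c <= a + Y. *)
Lemma rate_bounds (F : realFieldType) (M N c a Y : F) :
  0 < N -> 0 <= Y -> 0 < M * N - a - Y ->
  (c - a / N <= 0 -> 1 / N <= (M - c) / (M * N - a - Y)) /\
  (Y / N <= c - a / N -> (M - c) / (M * N - a - Y) <= 1 / N).
Proof.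
move=> N_gt0 Y_ge0 D_gt0.
have aN : a / N * N = a by rewrite divfK ?gt_eqF.
have YN : Y / N * N = Y by rewrite divfK ?gt_eqF.
split => h.
  by rewrite ler_pdivlMr // mulrAC ler_pdivrMr //; nra.
by rewrite ler_pdivrMr // mulrAC ler_pdivlMr //; nra.
Qed.

Section Potential.
Variables (R : realType) (m n : nat).
Hypothesis n_gt0 : (0 < n)%N.
Local Notation f := (fpot m n R).
Local Notation y := ((Ybig m n R)%:R / n%:R : R).

(* [Xkt m n R g z k t] is convertible to [Xval (ccnt g z k t)%:R (acnt g k t)%:R]. *)
Definition Xval (c a : R) : R := f (c - a / n%:R) - 3 * c - 3 * a / n%:R.

Lemma Ybig_div_ge0 : 0 <= y.
Proof. by rewrite divr_ge0 ?ler0n. Qed.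

Lemma inv_n_gt0 : 0 < 1 / (n%:R : R).
Proof. by rewrite divr_gt0 ?ltr0n. Qed.

Lemma inv_n_le1 : 1 / (n%:R : R) <= 1.
Proof. by rewrite ler_pdivrMr ?ltr0n // mul1r ler1n. Qed.

Lemma fpot_nonpos {x} : x <= 0 -> f x = x ^+ 2.
Proof. by rewrite /fpot => ->. Qed.

Lemma fpot_flat {x} : 0 < x -> x < y -> f x = 0.
Proof. by move=> x_gt0 xy; rewrite /fpot leNgt x_gt0 xy. Qed.

Lemma fpot_high {x} : y <= x -> f x = (x - y) ^+ 2.
Proof.
move=> yx; have y_ge0 := Ybig_div_ge0.
case: (lerP x 0) => [x_le0|x_gt0]; last by rewrite /fpot leNgt x_gt0 ltNge yx.
have [-> ->] : x = 0 /\ y = 0 by split; lra.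
by rewrite fpot_nonpos // subr0.
Qed.

Lemma fpot_le_sqr x : f x <= x ^+ 2.
Proof.
have := Ybig_div_ge0; case: (lerP x 0) => [/fpot_nonpos -> //|x_gt0 y_ge0].
case: (ltrP x y) => [/(fpot_flat x_gt0) ->|xy]; first exact: sqr_ge0.
rewrite fpot_high //; nra.
Qed.

Lemma fpot_le_sqr_shift x : f x <= (x - y) ^+ 2.
Proof.
have := Ybig_div_ge0; case: (lerP x 0) => [x_le0 y_ge0|x_gt0 _].
  rewrite fpot_nonpos //; have : 0 <= - x by rewrite oppr_ge0.
  by move/mulr_ge0/(_ y_ge0); nra.
case: (ltrP x y) => [/(fpot_flat x_gt0) ->|/fpot_high -> //].
exact: sqr_ge0.
Qed.

Section Drift.
Variables (x p q : R).
Local Notation drift := (p * f (x + 1 - q) + (1 - p) * f (x - q)).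

Lemma fpot_drift_nonpos : 0 <= p <= 1 -> 0 < q <= 1 -> x <= 0 -> q <= p ->
  drift <= f x + 3 * p + 3 * q.
Proof.
move=> /andP[p_ge0 p_le1] /andP[q_gt0 q_le1] x_le0 qp; rewrite (fpot_nonpos x_le0).
have := ler_wpM2l p_ge0 (fpot_le_sqr (x + 1 - q)).
have := ler_wpM2l (_ : 0 <= 1 - p) (fpot_le_sqr (x - q)).
rewrite subr_ge0 => /(_ p_le1).
nra.
Qed.

Lemma fpot_drift_flat : 0 <= p <= 1 -> 0 < q <= 1 -> 0 < x -> x < y ->
  drift <= f x + 3 * p + 3 * q.
Proof.
move=> /andP[p_ge0 p_le1] /andP[q_gt0 q_le1] x_gt0 xy; rewrite (fpot_flat x_gt0 xy).
have f1 : f (x + 1 - q) <= 1.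
  have x1_gt0 : 0 < x + 1 - q by lra.
  case: (ltrP (x + 1 - q) y) => [/(fpot_flat x1_gt0) -> //|yx1].
  rewrite (fpot_high yx1) expr2.
  have [a_ge0 a_le1] : 0 <= x + 1 - q - y /\ x + 1 - q - y <= 1 by split; lra.
  exact: mulr_ile1.
have f2 : f (x - q) <= q ^+ 2.
  case: (lerP (x - q) 0) => [x_le0|x_gt0']; first by rewrite (fpot_nonpos x_le0); nra.
  by rewrite (fpot_flat x_gt0') ?sqr_ge0 //; lra.
have := ler_wpM2l p_ge0 f1.
have := ler_wpM2l (_ : 0 <= 1 - p) f2; rewrite subr_ge0 => /(_ p_le1).
nra.
Qed.

Lemma fpot_drift_high : 0 <= p <= 1 -> 0 < q <= 1 -> y <= x -> p <= q ->
  drift <= f x + 3 * p + 3 * q.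
Proof.
move=> /andP[p_ge0 p_le1] /andP[q_gt0 q_le1] yx pq; rewrite (fpot_high yx).
have := ler_wpM2l p_ge0 (fpot_le_sqr_shift (x + 1 - q)).
have := ler_wpM2l (_ : 0 <= 1 - p) (fpot_le_sqr_shift (x - q)).
rewrite subr_ge0 => /(_ p_le1).
nra.
Qed.

End Drift.

Lemma fpot_drift (x p q : R) : 0 <= p <= 1 -> 0 < q <= 1 ->
  (x <= 0 -> q <= p) -> (y <= x -> p <= q) ->
  p * f (x + 1 - q) + (1 - p) * f (x - q) <= f x + 3 * p + 3 * q.
Proof.
move=> p01 q01 lo hi.
case: (lerP x 0) => [x_le0|x_gt0]; first exact: fpot_drift_nonpos (lo x_le0).
case: (ltrP x y) => [xy|yx]; first exact: fpot_drift_flat.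
exact: fpot_drift_high (hi yx).
Qed.

Lemma Xval_drift (c a p : R) : 0 <= p <= 1 ->
  (c - a / n%:R <= 0 -> 1 / n%:R <= p) -> (y <= c - a / n%:R -> p <= 1 / n%:R) ->
  Xval c (a + 1) + (Xval (c + 1) (a + 1) - Xval c (a + 1)) * p <= Xval c a.
Proof.
move=> p01 lo hi; have n_neq0 : n%:R != 0 :> R by rewrite pnatr_eq0 -lt0n.
have q01 : 0 < 1 / (n%:R : R) <= 1 by rewrite inv_n_gt0 inv_n_le1.
have := fpot_drift _ _ _ p01 q01 lo hi; rewrite /Xval.
have -> : c + 1 - (a + 1) / n%:R = c - a / n%:R + 1 - 1 / n%:R by field.
have -> : c - (a + 1) / n%:R = c - a / n%:R - 1 / n%:R by field.
have -> : 3 * (a + 1) / n%:R = 3 * a / n%:R + 3 * (1 / n%:R) by field.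
lra.
Qed.

End Potential.

Lemma acnt_S n (g : nat -> 'I_n) k t : (0 < t)%N ->
  acnt g k t.+1 = (acnt g k t + (g t == k))%N.
Proof.
by case: t => // t _; rewrite /acnt -[t.+2.-1]addn1 iotaD count_cat /= add1n addn0.
Qed.

Lemma ccnt_S n (g : nat -> 'I_n) z k t : (0 < t)%N ->
  ccnt g z k t.+1 = (ccnt g z k t + ((g t == k) && z t))%N.
Proof.
by case: t => // t _; rewrite /ccnt -[t.+2.-1]addn1 iotaD count_cat /= add1n addn0.
Qed.

Lemma acnt_le {n} (g : nat -> 'I_n) k t : (acnt g k t <= t.-1)%N.
Proof. by rewrite -[t.-1](size_iota 1) count_size. Qed.

Lemma eq_in_pre A (v v' : nat -> A) t :
  pre v t = pre v' t -> forall i, (1 <= i <= t)%N -> v i = v' i.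
Proof. by move=> /eq_in_map eq_vv' i i_le; apply: eq_vv'; rewrite mem_iota; lia. Qed.

Lemma eq_in_acnt n (g g' : nat -> 'I_n) k t :
  (forall i, (1 <= i < t)%N -> g i = g' i) -> acnt g k t = acnt g' k t.
Proof.
move=> eq_gg'; apply: eq_in_count => i; rewrite mem_iota => i_lt.
by rewrite eq_gg' //; lia.
Qed.

Lemma eq_in_ccnt n (g g' : nat -> 'I_n) z z' k t :
  (forall i, (1 <= i < t)%N -> g i = g' i) ->
  (forall i, (1 <= i < t)%N -> z i = z' i) -> ccnt g z k t = ccnt g' z' k t.
Proof.
move=> eq_gg' eq_zz'; apply: eq_in_count => i; rewrite mem_iota => i_lt.
by rewrite eq_gg' ?eq_zz' //; lia.
Qed.

Section CondExp.
Context {R : realType} {Omega : finType} {P : Omega -> R}.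
Context {K : eqType} {key : Omega -> K} {w : Omega}.
Hypotheses (P_ge0 : forall w', 0 <= P w') (Pw_gt0 : 0 < P w).
Local Notation E X := (condexp R Omega P K X key w).
Local Notation atom := (fun w' => key w' == key w).

Lemma atom_mass_gt0 : 0 < \sum_(w' | atom w') P w'.
Proof.
rewrite (bigD1 w) //=; apply: (lt_le_trans Pw_gt0); rewrite lerDl.
exact: sumr_ge0.
Qed.

Lemma condexp_affine {X Z : Omega -> R} {a b : R} :
  (forall w', atom w' -> X w' = a + b * Z w') -> E X = a + b * E Z.
Proof.
move=> XE; rewrite /condexp (eq_bigr (fun w' => a * P w' + b * (P w' * Z w'))).
  rewrite big_split /= -!mulr_sumr; field; exact: lt0r_neq0 atom_mass_gt0.
by move=> w' /XE ->; ring.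
Qed.

Lemma condexp_const {X : Omega -> R} {a : R} :
  (forall w', atom w' -> X w' = a) -> E X = a.
Proof.
move=> XE; rewrite (@condexp_affine X X a 0) ?mul0r ?addr0 // => w' /XE ->.
by rewrite mul0r addr0.
Qed.

Lemma condexp_eq0 {X : Omega -> R} :
  (forall w', atom w' -> 0 < P w' -> X w' = 0) -> E X = 0.
Proof.
move=> X0; rewrite /condexp big1 ?mul0r // => w' atom_w'.
have [->|P_neq0] := eqVneq (P w') 0; first by rewrite mul0r.
by rewrite X0 ?mulr0 // lt_def P_neq0 P_ge0.
Qed.

Lemma condexp_indicator_bounds (b : Omega -> bool) :
  0 <= E (fun w' => (b w' : nat)%:R) <= 1.
Proof.
have mass_gt0 := atom_mass_gt0; apply/andP; split.
  rewrite divr_ge0 ?(ltW mass_gt0) //; apply: sumr_ge0 => w' _.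
  by rewrite mulr_ge0 ?ler0n.
rewrite ler_pdivrMr // mul1r; apply: ler_sum => w' _.
by case: (b w'); rewrite ?mulr1 ?mulr0.
Qed.

End CondExp.

Section OneRound.
Variables (R : realType) (m n : nat) (Omega : finType) (P : Omega -> R).
Variables (g : Omega -> nat -> 'I_n) (z : Omega -> nat -> bool).
Hypotheses (n_gt0 : (0 < n)%N) (P_ge0 : forall w, 0 <= P w).
Local Notation Y := (Ybig m n R).
Hypothesis hit_count_bounds :
  forall w, 0 < P w -> forall (k : 'I_n) t, (1 <= t <= (m * n).+1)%N ->
  (m <= ccnt (g w) (z w) k t + (m * n - acnt (g w) k t - Y))%N
  && (ccnt (g w) (z w) k t <= m)%N.
Hypothesis hit_rate : forall t, (1 <= t <= m * n)%N -> forall w, 0 < P w ->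
  (acnt (g w) (g w t) t + Y < m * n)%N ->
  condexp R Omega P _ (fun w' => ((z w' t : nat)%:R : R))
    (fun w' => (pre (g w') t, pre (z w') t.-1)) w
  = ((m%:R - (ccnt (g w) (z w) (g w t) t)%:R) /
     ((m * n)%:R - (acnt (g w) (g w t) t)%:R - Y%:R)).

Variables (k : 'I_n) (t : nat) (w : Omega).
Hypotheses (t_gt0 : (0 < t)%N) (t_le_mn : (t <= m * n)%N) (Pw_gt0 : 0 < P w).
Local Notation key := (fun w' => (pre (g w') t, pre (z w') t.-1)).
Local Notation c0 := (ccnt (g w) (z w) k t).
Local Notation a0 := (acnt (g w) k t).
Local Notation p := (condexp R Omega P _ (fun w' => ((z w' t : nat)%:R : R)) key w).

Lemma atom_counts w' : key w' == key w ->
  [/\ g w' t = g w t, ccnt (g w') (z w') k t = c0 & acnt (g w') k t = a0].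
Proof.
move=> /eqP[/eq_in_pre eq_g /eq_in_pre eq_z].
have eq_g' i : (1 <= i < t)%N -> g w' i = g w i by move=> ?; apply: eq_g; lia.
split; first by apply: eq_g; lia.
  by apply: eq_in_ccnt => // i ?; apply: eq_z; lia.
exact: eq_in_acnt.
Qed.

Lemma Xkt_succ_atom w' : key w' == key w ->
  Xkt m n R (g w') (z w') k t.+1
  = Xval R m n (c0 + ((g w t == k) && z w' t))%:R (a0 + (g w t == k))%:R.
Proof.
by move=> /atom_counts[eq_gt eq_c eq_a]; rewrite /Xkt ccnt_S // acnt_S // eq_gt eq_c eq_a.
Qed.

Lemma rate_saturated : g w t = k -> (m * n <= a0 + Y)%N -> c0 = m /\ p = 0.
Proof.
move=> gk sat; have t_range : (1 <= t <= (m * n).+1)%N by lia.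
have /andP[c0_ge c0_le] := hit_count_bounds w Pw_gt0 k t t_range.
split; first lia.
apply: condexp_eq0 => // w' atom_w' Pw'_gt0.
have t1_range : (1 <= t.+1 <= (m * n).+1)%N by lia.
have /andP[_] := hit_count_bounds w' Pw'_gt0 k t.+1 t1_range.
have [eq_gt eq_c _] := atom_counts w' atom_w'.
rewrite ccnt_S // eq_c eq_gt gk eqxx /=.
by case: (z w' t) => //=; lia.
Qed.

Lemma atom_rate_bounds : g w t = k ->
  ((c0%:R - a0%:R / n%:R : R) <= 0 -> 1 / n%:R <= p) /\
  (Y%:R / n%:R <= (c0%:R - a0%:R / n%:R : R) -> p <= 1 / n%:R).
Proof.
move=> gk; have n_pos : 0 < (n%:R : R) by rewrite ltr0n.
case: (ltnP (a0 + Y) (m * n)) => [unsat|sat].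
  have p_eq : p = (m%:R - c0%:R) / ((m * n)%:R - a0%:R - Y%:R).
    by rewrite hit_rate ?t_gt0 ?gk.
  rewrite p_eq natrM; apply: rate_bounds => //.
  by move: unsat; rewrite -(ltr_nat R) natrD natrM; lra.
have [c0_eq p0] := rate_saturated gk sat; rewrite p0 c0_eq.
have x_gt0 : (0 : R) < m%:R - a0%:R / n%:R.
  rewrite subr_gt0 ltr_pdivrMr // -natrM ltr_nat.
  by have := acnt_le (g w) k t; lia.
split=> [x_le0|_]; first by move: x_gt0 x_le0; lra.
by rewrite divr_ge0 ?ler0n.
Qed.

Lemma condexp_Xkt_succ_le :
  condexp R Omega P _ (fun w' => Xkt m n R (g w') (z w') k t.+1) key w
  <= Xkt m n R (g w) (z w) k t.
Proof.
have [gk|gk] := eqVneq (g w t) k; last first.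
  rewrite (condexp_const P_ge0 Pw_gt0 (a := Xkt m n R (g w) (z w) k t)) // => w'.
  by move=> /Xkt_succ_atom ->; rewrite (negbTE gk) /= !addn0.
have XE w' : key w' == key w -> Xkt m n R (g w') (z w') k t.+1 =
    Xval R m n c0%:R (a0%:R + 1)
    + (Xval R m n (c0%:R + 1) (a0%:R + 1) - Xval R m n c0%:R (a0%:R + 1)) * (z w' t)%:R.
  move=> /Xkt_succ_atom ->; rewrite gk eqxx /= !natrD.
  by case: (z w' t); rewrite /= ?mulr1 ?mulr0 ?addr0 // subrKC.
have [lo hi] := atom_rate_bounds gk.
rewrite (condexp_affine P_ge0 Pw_gt0 XE).
exact: Xval_drift n_gt0 _ _ _ (condexp_indicator_bounds P_ge0 Pw_gt0 _) lo hi.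
Qed.

End OneRound.

Theorem lemma2p2 (R : realType) (m n : nat)
  (Omega : finType) (P : Omega -> R)
  (T : finType) (U : Omega -> T)                      (* the Guesser's private randomness *)
  (strat : nat -> seq bool -> T -> 'I_n)             (* the (randomized) strategy *)
  (deck : Omega -> nat -> 'I_n)                       (* the shuffled deck *)
  (g : Omega -> nat -> 'I_n)                          (* the guesses *)
  (z : Omega -> nat -> bool) :                        (* the coupled vector z *)
  (0 < m)%N -> (0 < n)%N ->
  1200 * Num.sqrt (m%:R : R) <= n%:R ->
  is_prob R Omega P ->
  (* the deck is uniformly distributed over arrangements with m copies of each label *)
  (forall w, 0 < P w -> valid_deck m n (deck w)) ->
  (forall d d', valid_deck m n d -> valid_deck m n d' ->
     Pr R Omega P (fun w => agree m n (deck w) d) = Pr R Omega P (fun w => agree m n (deck w) d')) ->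
  (* the Guesser's randomness is independent of the deck *)
  (forall (u : T) (d : nat -> 'I_n),
     Pr R Omega P (fun w => (U w == u) && agree m n (deck w) d)
     = Pr R Omega P (fun w => U w == u) * Pr R Omega P (fun w => agree m n (deck w) d)) ->
  (* g_t is a (randomized) function of y_1, ..., y_{t-1} *)
  (forall w t, 0 < P w -> (1 <= t <= m * n)%N ->
     g w t = strat t (pre (yv (deck w) (g w)) t.-1) (U w)) ->
  (* (a) *)
  (forall w, 0 < P w -> forall (k : 'I_n) t, (1 <= t <= (m * n).+1)%N ->
     (m <= ccnt (g w) (z w) k t + (m * n - acnt (g w) k t - Ybig m n R))%N
     && (ccnt (g w) (z w) k t <= m)%N) ->
  (* (b) *)
  (forall t, (1 <= t <= m * n)%N ->
   forall (w0 w1 : Omega) (zeta : nat -> bool), 0 < P w0 ->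
     let A := fun w => (pre (g w) t == pre (g w0) t)
                       && (pre (yv (deck w) (g w)) t == pre (yv (deck w0) (g w0)) t) in
     let B := fun w => (pre (g w) (m * n) == pre (g w1) (m * n))
                       && (pre (yv (deck w) (g w)) (m * n)
                           == pre (yv (deck w1) (g w1)) (m * n)) in
     Pr R Omega P (fun w => [&& A w, B w & pre (z w) t == pre zeta t]) / Pr R Omega P A
     = (Pr R Omega P (fun w => A w && B w) / Pr R Omega P A) *
       \prod_(1 <= i < t.+1) (Pr R Omega P (fun w => A w && (z w i == zeta i)) / Pr R Omega P A)) ->
  (* (c) *)
  (forall t, (1 <= t <= m * n)%N -> forall w, 0 < P w ->
     (acnt (g w) (g w t) t + Ybig m n R < m * n)%N ->
     condexp R Omega P _ (fun w' => ((z w' t : nat)%:R : R))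
             (fun w' => (pre (g w') t, pre (z w') t.-1)) w
     = ((m%:R - (ccnt (g w) (z w) (g w t) t)%:R) /
        ((m * n)%:R - (acnt (g w) (g w t) t)%:R - (Ybig m n R)%:R))) ->
  (* (d) *)
  (forall t, (1 <= t <= m * n)%N -> forall w, 0 < P w ->
     condexp R Omega P _ (fun w' => ((yv (deck w') (g w') t : nat)%:R : R))
             (fun w' => (pre (g w') t, pre (yv (deck w') (g w')) t.-1)) w
     <= condexp R Omega P _ (fun w' => ((z w' t : nat)%:R : R))
             (fun w' => (pre (g w') t, pre (z w') t.-1)) w ->
     (yv (deck w) (g w) t <= z w t)%N) ->
  (* conclusion: E(X_{k,t+1} | g_{<=t}, z_{<=t-1}) <= X_{k,t} almost surely *)
  forall (k : 'I_n) (t : nat), (1 <= t <= m * n)%N ->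
  forall w, 0 < P w ->
    condexp R Omega P _ (fun w' => Xkt m n R (g w') (z w') k t.+1)
            (fun w' => (pre (g w') t, pre (z w') t.-1)) w
    <= Xkt m n R (g w) (z w) k t.
Proof.
(* (a) and (c) already pin down the conditional law of z_t; the rest is unused. *)
move=> _ n_gt0 _ [P_ge0 _] _ _ _ _ hit_count_bounds _ hit_rate _ k t.
move=> /andP[t_gt0 t_le_mn] w Pw_gt0.
by apply: condexp_Xkt_succ_le.
Qed.
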